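(* Let $S\subseteq\mathbb N^2$ be a symmetric local good semigroup, let $\boldsymbol e$ be the minimal element of $S$ having all components positive, and suppose $\Delta^S(\boldsymbol e)\ne\emptyset$. Then every absolute element of $S$ belongs to $\mathrm{Ap}(S,\boldsymbol e)=S\setminus(\boldsymbol e+S)$.
   Context: A good semigroup is a submonoid $S$ of $(\mathbb{N}^2,+)$ closed under componentwise minimum (G1), satisfying (G2): if $\boldsymbol\alpha\neq\boldsymbol\beta\in S$ and $\alpha_i=\beta_i$, there is $\boldsymbol\epsilon\in S$ with $\epsilon_i>\alpha_i$, $\epsilon_j\ge\min\{\alpha_j,\beta_j\}$ for $j\ne i$, with equality if $\alpha_j\ne\beta_j$; and (G3): $\boldsymbol c+\mathbb N^2\subseteq S$ for some $\boldsymbol c$. Local: $\boldsymbol 0$ is its only element with a zero component. Conductor $\boldsymbol c$: the minimal $\boldsymbol\alpha\in\mathbb Z^2$ with $\boldsymbol\alpha+\mathbb N^2\subseteq S$; $\boldsymbol\gamma=\boldsymbol c-(1,1)$. For $\boldsymbol\alpha\in\mathbb Z^2$: $\Delta^S_i(\boldsymbol\alpha)=\{\boldsymbol\beta\in S:\beta_i=\alpha_i,\ \beta_j>\alpha_j\ (j\ne i)\}$ and $\Delta^S(\boldsymbol\alpha)=\Delta^S_1(\boldsymbol\alpha)\cup\Delta^S_2(\boldsymbol\alpha)$. $S$ is symmetric if for every $\boldsymbol\alpha\in\mathbb Z^2$: $\boldsymbol\alpha\in S$ iff $\Delta^S(\boldsymbol\gamma-\boldsymbol\alpha)=\emptyset$.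 An element $\boldsymbol\alpha\in S$ is absolute if $\Delta^S(\boldsymbol\alpha)=\emptyset$. *)

From Stdlib Require Import ZArith.
Open Scope Z_scope.

Definition pt := (Z * Z)%type.
Definition padd (a b : pt) : pt := (fst a + fst b, snd a + snd b).
Definition psub (a b : pt) : pt := (fst a - fst b, snd a - snd b).
Definition pmin (a b : pt) : pt := (Z.min (fst a) (fst b), Z.min (snd a) (snd b)).
Definition ple (a b : pt) : Prop := fst a <= fst b /\ snd a <= snd b.
Definition in_N2 (a : pt) : Prop := 0 <= fst a /\ 0 <= snd a.

Definition comp (i : nat) (a : pt) : Z := if Nat.eqb i 1 then fst a else snd a.
Definition other (i : nat) : nat := if Nat.eqb i 1 then 2%nat else 1%nat.

Definition submonoid_N2 (S : pt -> Prop) : Prop :=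
  (forall a, S a -> in_N2 a) /\ S (0, 0) /\ (forall a b, S a -> S b -> S (padd a b)).

Definition G1 (S : pt -> Prop) : Prop := forall a b, S a -> S b -> S (pmin a b).

Definition G2 (S : pt -> Prop) : Prop :=
  forall (a b : pt) (i : nat), (i = 1%nat \/ i = 2%nat) ->
    S a -> S b -> a <> b -> comp i a = comp i b ->
    exists e, S e /\ comp i e > comp i a /\
      (let j := other i in
       comp j e >= Z.min (comp j a) (comp j b) /\
       (comp j a <> comp j b -> comp j e = Z.min (comp j a) (comp j b))).

Definition G3 (S : pt -> Prop) : Prop :=
  exists c : pt, in_N2 c /\ forall n, in_N2 n -> S (padd c n).

Definition good_semigroup (S : pt -> Prop) : Prop :=
  submonoid_N2 S /\ G1 S /\ G2 S /\ G3 S.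

Definition local (S : pt -> Prop) : Prop :=
  forall a, S a -> (fst a = 0 \/ snd a = 0) -> a = (0, 0).

Definition conductor_prop (S : pt -> Prop) (a : pt) : Prop :=
  forall n, in_N2 n -> S (padd a n).
Definition is_conductor (S : pt -> Prop) (c : pt) : Prop :=
  conductor_prop S c /\ forall d, conductor_prop S d -> ple c d.

Definition Delta_i (S : pt -> Prop) (i : nat) (a : pt) : pt -> Prop :=
  fun b => S b /\ comp i b = comp i a /\ comp (other i) b > comp (other i) a.
Definition Delta (S : pt -> Prop) (a : pt) : pt -> Prop :=
  fun b => Delta_i S 1 a b \/ Delta_i S 2 a b.
Definition empty_set (P : pt -> Prop) : Prop := forall b, ~ P b.

Definition symmetric (S : pt -> Prop) : Prop :=
  exists c, is_conductor S c /\
    let gamma := psub c (1, 1) in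
    forall a : pt, S a <-> empty_set (Delta S (psub gamma a)).

Definition absolute (S : pt -> Prop) (a : pt) : Prop := S a /\ empty_set (Delta S a).

Definition is_min_pos (S : pt -> Prop) (e : pt) : Prop :=
  S e /\ 0 < fst e /\ 0 < snd e /\
  forall b, S b -> 0 < fst b -> 0 < snd b -> ple e b.

Definition Apery (S : pt -> Prop) (e : pt) : pt -> Prop :=
  fun a => S a /\ ~ (exists b, S b /\ a = padd e b).

(* If [a = e + b] with [b] in [S], translating by [b] maps [Delta(e)] into
   [Delta(a)], because [S] is closed under addition and translation preserves
   the equalities and strict inequalities of coordinates that define [Delta]. *)
From Stdlib Require Import ZArith Lia.
Open Scope Z_scope.

Definition add_closed (S : pt -> Prop) : Prop :=
  forall a b, S a -> S b -> S (padd a b).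

Lemma comp_padd (i : nat) (a b : pt) : comp i (padd a b) = comp i a + comp i b.
Proof. unfold comp, padd; destruct (Nat.eqb i 1); reflexivity. Qed.

Lemma Delta_i_padd (S : pt -> Prop) (i : nat) (a b d : pt) :
  add_closed S -> S b -> Delta_i S i a d -> Delta_i S i (padd a b) (padd d b).
Proof.
  intros Hadd Sb [Sd [Hi Hj]].
  split; [exact (Hadd d b Sd Sb)|].
  rewrite !comp_padd; lia.
Qed.

Lemma Delta_padd (S : pt -> Prop) (a b d : pt) :
  add_closed S -> S b -> Delta S a d -> Delta S (padd a b) (padd d b).
Proof.
  intros Hadd Sb [Hd | Hd]; [left | right]; apply Delta_i_padd; assumption.
Qed.

Lemma absolute_not_translate (S : pt -> Prop) (e a : pt) :
  add_closed S -> ~ empty_set (Delta S e) -> absolute S a ->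
  ~ (exists b, S b /\ a = padd e b).
Proof.
  intros Hadd HDe [_ HDa] [b [Sb ->]].
  apply HDe; intros d Hd.
  apply (HDa (padd d b)), Delta_padd; assumption.
Qed.

Theorem lemma6p3 (S : pt -> Prop) (e : pt) :
  good_semigroup S -> local S -> symmetric S ->
  is_min_pos S e -> ~ empty_set (Delta S e) ->
  forall a, absolute S a -> Apery S e a.
Proof.
  intros [[_ [_ Hadd]] _] _ _ _ HDe a Ha.
  split; [exact (proj1 Ha)|].
  apply absolute_not_translate; assumption.
Qed.
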